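(* Let $f\in\mathcal F_{\mathrm{op}}$ and let $n\ge 1$. Then the quantum $\chi^2$-divergence $\chi^2_f(\rho,\sigma)$ is jointly convex in $(\rho,\sigma)$ on pairs of positive definite $n\times n$ density matrices. That is, for all positive definite density matrices $\rho_1,\rho_2,\sigma_1,\sigma_2\in M_n(\mathbb C)$ and all $\lambda\in[0,1]$, \[ \chi^2_f\bigl(\lambda\rho_1+(1-\lambda)\rho_2,\ \lambda\sigma_1+(1-\lambda)\sigma_2\bigr)\le \lambda\,\chi^2_f(\rho_1,\sigma_1)+(1-\lambda)\,\chi^2_f(\rho_2,\sigma_2). \]
   Context: $\mathcal F_{\mathrm{op}}$ denotes the class of functions $f:(0,\infty)\to(0,\infty)$ such that (i) $f$ is operator monotone, (ii) $f(t)=t\,f(t^{-1})$ for all $t>0$, and (iii) $f(1)=1$. $M_n(\mathbb C)$ is regarded as a Hilbert space with the inner product $(A\mid B)=\mathrm{Tr}\,A^*B$. A density matrix is a positive semidefinite matrix of trace one. For a positive definite $\sigma\in M_n(\mathbb C)$, the (super)operators $L_\sigma,R_\sigma$ on $M_n(\mathbb C)$ are defined by $L_\sigma A=\sigma A$ and $R_\sigma A=A\sigma$; they are commuting positive definite operators on $M_n(\mathbb C)$, so functions of the pair $(L_\sigma,R_\sigma)$ are defined by joint functional calculus. For $f\in\mathcal F_{\mathrm{op}}$, the Morozova–Chentsov function is $c(x,y)=\dfrac{1}{y\,f(x y^{-1})}$ for $x,y>0$, and the associated monotone metric is $K_\sigma(A,B)=\mathrm{Tr}\,A^*\,c(L_\sigma,R_\sigma)(B)$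 for positive definite $\sigma$ and $A,B\in M_n(\mathbb C)$. The $\chi^2_f$-divergence of density matrices $\rho,\sigma$ with $\sigma$ positive definite is \[ \chi^2_f(\rho,\sigma)=K_\sigma(\rho-\sigma,\rho-\sigma)=\mathrm{Tr}\,(\rho-\sigma)\,c(L_\sigma,R_\sigma)(\rho-\sigma). \] *)

(* Matrices over an arbitrary numClosedFieldType C
   (the complex numbers being the intended instance). *)
From HB Require Import structures.
From mathcomp Require Import all_boot all_order all_algebra.
Set Implicit Arguments. Unset Strict Implicit. Unset Printing Implicit Defensive.
Import Order.TTheory GRing.Theory Num.Theory.
Local Open Scope ring_scope.
Local Open Scope sesquilinear_scope.

Section Defs.
Variable C : numClosedFieldType.

Definition adjmx (m n : nat) (A : 'M[C]_(m, n)) : 'M[C]_(n, m) := A ^t*.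

Definition hermitian_mx (n : nat) (A : 'M[C]_n) : Prop := adjmx A = A.

Definition psd_mx (n : nat) (A : 'M[C]_n) : Prop :=
  hermitian_mx A /\ forall v : 'rV[C]_n, 0 <= (v *m A *m adjmx v) 0 0.

Definition pd_mx (n : nat) (A : 'M[C]_n) : Prop :=
  hermitian_mx A /\ forall v : 'rV[C]_n, v != 0 -> 0 < (v *m A *m adjmx v) 0 0.

Definition loewner_le (n : nat) (A B : 'M[C]_n) : Prop := psd_mx (B - A).

Definition density_mx (n : nat) (A : 'M[C]_n) : Prop := psd_mx A /\ \tr A = 1.
Definition pd_density_mx (n : nat) (A : 'M[C]_n) : Prop := pd_mx A /\ \tr A = 1.

(* Functional calculus of a Hermitian (normal) matrix via the library's
   spectral decomposition  A = P^-1 diag(d) P  (P unitary):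
   f(A) = P^-1 diag(f d) P. *)
Definition mxfun (f : C -> C) (n : nat) (A : 'M[C]_n) : 'M[C]_n :=
  invmx (spectralmx A) *m diag_mx (map_mx f (spectral_diag A)) *m spectralmx A.

Definition operator_monotone (f : C -> C) : Prop :=
  forall (m : nat) (A B : 'M[C]_m),
    pd_mx A -> pd_mx B -> loewner_le A B -> loewner_le (mxfun f A) (mxfun f B).

(* The class F_op.  f is only relevant on (0,oo); its values elsewhere are
   ignored by every condition below. *)
Definition F_op (f : C -> C) : Prop :=
  [/\ (forall t, 0 < t -> 0 < f t),
      operator_monotone f,
      (forall t, 0 < t -> f t = t * f t^-1) &
      f 1 = 1].

Definition MC_fun (f : C -> C) (x y : C) : C := (y * f (x / y))^-1.

(* Joint functional calculus g(L_sigma, R_sigma) applied to X.  With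
   sigma = P^-1 diag(d) P (P unitary, rows u_i^* of P), the operators
   X |-> u_i u_j^* are joint eigenvectors of (L_sigma, R_sigma) with joint
   eigenvalue (d_i, d_j), so
   g(L_sigma,R_sigma)(X) = sum_{i,j} g(d_i,d_j) (u_i^* X u_j) u_i u_j^*
                         = P^-1 [ g(d_i,d_j) (P X P^-1)_{ij} ]_{ij} P. *)
Definition joint_fun (g : C -> C -> C) (n : nat) (sigma X : 'M[C]_n) : 'M[C]_n :=
  let P := spectralmx sigma in
  let d := spectral_diag sigma in
  invmx P *m (\matrix_(i, j) (g (d 0 i) (d 0 j) * (P *m X *m invmx P) i j)) *m P.

Definition monotone_metric (f : C -> C) (n : nat) (sigma A B : 'M[C]_n) : C :=
  \tr (adjmx A *m joint_fun (MC_fun f) sigma B).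

Definition chi2 (f : C -> C) (n : nat) (rho sigma : 'M[C]_n) : C :=
  monotone_metric f sigma (rho - sigma) (rho - sigma).

End Defs.

From HB Require Import structures.
From mathcomp Require Import all_boot all_order all_algebra ring.
Set Implicit Arguments. Unset Strict Implicit. Unset Printing Implicit Defensive.
Import Order.TTheory GRing.Theory Num.Theory Num.Def.
Local Open Scope ring_scope.
Local Open Scope sesquilinear_scope.

(* The divergence is a maximum of jointly convex functions: completing the square
   in the joint eigenbasis of [L_sigma] and [R_sigma],
     chi2_f(rho, sigma) = max_Y 2 Re <rho - sigma, Y> - <Y, c(L_sigma, R_sigma)^-1 Y>,
   attained at [Y = c(L_sigma, R_sigma)(rho - sigma)].  The first term is linear
   in [(rho, sigma)].  As [c(x, y)^-1 = y f(x / y)], the second is the quadratic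
   form of the operator perspective [R^(1/2) f(R^(-1/2) L R^(-1/2)) R^(1/2)] at
   [(L_sigma, R_sigma)], which are linear in [sigma]; this perspective is jointly
   concave, being positively homogeneous and superadditive.  Superadditivity is
   the Hansen-Pedersen-Jensen inequality for a unitary dilation of the column
   [R_i^(1/2) (R1 + R2)^(-1/2)], which reduces to Hansen's inequality
   [P f(M) P <= f(P M P)]: dominate [M] by a block-diagonal matrix through a
   Schur complement, losing a factor [1 + e] on the corner, and absorb it with
   [f(c t) <= c f(t)] for [c >= 1], a consequence of [f(t) = t f(1/t)]. *)

Section ConjTranspose.
Variable C : numClosedFieldType.

Lemma trmxC_mul m n p (A : 'M[C]_(m, n)) (B : 'M[C]_(n, p)) :
  (A *m B)^t* = B^t* *m A^t*.
Proof. by rewrite trmx_mul map_mxM. Qed.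

Lemma trmxC_add m n (A B : 'M[C]_(m, n)) : (A + B)^t* = A^t* + B^t*.
Proof. by rewrite linearD map_mxD. Qed.

Lemma trmxC_opp m n (A : 'M[C]_(m, n)) : (- A)^t* = - A^t*.
Proof. by rewrite linearN map_mxN. Qed.

Lemma trmxC_scale m n a (A : 'M[C]_(m, n)) : (a *: A)^t* = a^* *: A^t*.
Proof. by rewrite linearZ map_mxZ. Qed.

Lemma trmxC0 m n : (0 : 'M[C]_(m, n))^t* = 0.
Proof. by rewrite trmx0 map_mx0. Qed.

Lemma trmxC1 m : (1%:M : 'M[C]_m)^t* = 1%:M.
Proof. by rewrite trmx1 map_mx1. Qed.

Lemma trmxC_diag m (e : 'rV[C]_m) : (diag_mx e)^t* = diag_mx (map_mx conjC e).
Proof. by rewrite tr_diag_mx map_diag_mx. Qed.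

Lemma trmxC_block m1 m2 n1 n2 (A : 'M[C]_(m1, n1)) (B : 'M[C]_(m1, n2))
  (D : 'M[C]_(m2, n1)) (E : 'M[C]_(m2, n2)) :
  (block_mx A B D E)^t* = block_mx (A^t*) (D^t*) (B^t*) (E^t*).
Proof. by rewrite tr_block_mx map_block_mx. Qed.

Lemma trmxC_row m n1 n2 (A : 'M[C]_(m, n1)) (B : 'M[C]_(m, n2)) :
  (row_mx A B)^t* = col_mx (A^t*) (B^t*).
Proof. by rewrite tr_row_mx map_col_mx. Qed.

Lemma trmxC_mul_herm m (A B : 'M[C]_m) : A^t* = A -> B^t* = B -> (A *m B)^t* = B *m A.
Proof. by move=> hA hB; rewrite trmxC_mul hA hB. Qed.

Lemma unitary_mulmxC m (Q : 'M[C]_m) : Q \is unitarymx -> Q *m Q^t* = 1%:M.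
Proof. by move/unitarymxP. Qed.

Lemma unitary_mulCmx m (Q : 'M[C]_m) : Q \is unitarymx -> Q^t* *m Q = 1%:M.
Proof. by move/unitarymxP/mulmx1C. Qed.

Lemma unitary_block m1 m2 (Q1 : 'M[C]_m1) (Q2 : 'M[C]_m2) :
  Q1 \is unitarymx -> Q2 \is unitarymx -> block_mx Q1 0 0 Q2 \is unitarymx.
Proof.
move=> uQ1 uQ2; apply/unitarymxP; rewrite trmxC_block !trmxC0 mulmx_block.
by rewrite !(mulmx0, mul0mx, addr0, add0r) !unitary_mulmxC // -scalar_mx_block.
Qed.

End ConjTranspose.

Section UnitaryDiag.
Variable C : numClosedFieldType.
Implicit Types (m : nat).

(* Locked: unfolding it makes unification with products of matrices slow. *)
Fact udiag_key : unit. Proof. by []. Qed.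
Definition udiag m (Q : 'M[C]_m) (e : 'rV[C]_m) : 'M[C]_m :=
  locked_with udiag_key (Q^t* *m diag_mx e *m Q).

Definition qform m (A : 'M[C]_m) (v : 'rV[C]_m) : C := (v *m A *m v^t*) 0 0.

Lemma udiagE m (Q : 'M[C]_m) (e : 'rV[C]_m) : udiag Q e = Q^t* *m diag_mx e *m Q.
Proof. by rewrite /udiag unlock. Qed.

Lemma eq_udiag m (Q : 'M[C]_m) (a b : 'rV[C]_m) :
  (forall k, a 0 k = b 0 k) -> udiag Q a = udiag Q b.
Proof. by move=> eq_ab; congr udiag; apply/rowP. Qed.

Lemma udiagM m (Q : 'M[C]_m) (a b c : 'rV[C]_m) : Q \is unitarymx ->
  (forall k, a 0 k * b 0 k = c 0 k) -> udiag Q a *m udiag Q b = udiag Q c.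
Proof.
move=> uQ abc; rewrite !udiagE !mulmxA -(mulmxA _ Q) unitary_mulmxC // mulmx1.
rewrite -(mulmxA (Q^t*)) mulmx_diag; congr (_ *m diag_mx _ *m _).
by apply/rowP=> k; rewrite mxE.
Qed.

Lemma udiag1 m (Q : 'M[C]_m) (e : 'rV[C]_m) : Q \is unitarymx ->
  (forall k, e 0 k = 1) -> udiag Q e = 1%:M.
Proof.
move=> uQ e1; rewrite (@eq_udiag _ _ _ (const_mx 1)) => [|k]; last by rewrite e1 mxE.
by rewrite udiagE diag_const_mx mulmx1 unitary_mulCmx.
Qed.

Lemma udiagD m (Q : 'M[C]_m) a b : udiag Q a + udiag Q b = udiag Q (a + b).
Proof. by rewrite !udiagE raddfD /= mulmxDr mulmxDl. Qed.

Lemma udiagZ m (Q : 'M[C]_m) c e : c *: udiag Q e = udiag Q (c *: e).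
Proof.
rewrite !udiagE scalemxAl scalemxAr; congr (_ *m _ *m _).
by apply/matrixP=> i j; rewrite !mxE mulrnAr.
Qed.

Lemma trmxC_udiag m (Q : 'M[C]_m) (e : 'rV[C]_m) :
  (udiag Q e)^t* = udiag Q (map_mx conjC e).
Proof. by rewrite !udiagE !trmxC_mul trmxCK trmxC_diag mulmxA. Qed.

Lemma qform_udiag m (Q : 'M[C]_m) e v :
  qform (udiag Q e) v = \sum_k e 0 k * ((v *m Q^t*) 0 k * ((v *m Q^t*) 0 k)^*).
Proof.
rewrite /qform udiagE !mulmxA -(mulmxA _ Q) -[Q](trmxCK Q) -trmxC_mul trmxCK.
rewrite mul_mx_diag !mxE; apply: eq_bigr => k _; rewrite !mxE.
by rewrite mulrA [_ * e 0 k]mulrC.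
Qed.

Lemma qformD m (A B : 'M[C]_m) v : qform (A + B) v = qform A v + qform B v.
Proof. by rewrite /qform mulmxDr mulmxDl mxE. Qed.

Lemma qformB m (A B : 'M[C]_m) v : qform (A - B) v = qform A v - qform B v.
Proof. by rewrite /qform mulmxBr mulmxBl !mxE. Qed.

Lemma qformZ m (A : 'M[C]_m) c v : qform (c *: A) v = c * qform A v.
Proof. by rewrite /qform -scalemxAr -scalemxAl mxE. Qed.

Lemma qform_conj m p (H : 'M[C]_(p, m)) (A : 'M[C]_p) v :
  qform (H^t* *m A *m H) v = qform A (v *m H^t*).
Proof. by rewrite /qform trmxC_mul trmxCK !mulmxA. Qed.

Lemma qform_row0 m1 m2 (A : 'M[C]_(m1 + m2)) (x : 'rV[C]_m1) :
  qform A (row_mx x 0) = qform (ulsubmx A) x.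
Proof.
rewrite /qform -{1}(submxK A) trmxC_row trmxC0 mul_row_block mul_row_col.
by rewrite !(mulmx0, mul0mx, addr0).
Qed.

Lemma qform_0row m1 m2 (A : 'M[C]_(m1 + m2)) (x : 'rV[C]_m2) :
  qform A (row_mx 0 x) = qform (drsubmx A) x.
Proof.
rewrite /qform -{1}(submxK A) trmxC_row trmxC0 mul_row_block mul_row_col.
by rewrite !(mulmx0, mul0mx, add0r).
Qed.

Lemma udiag_block m1 m2 (Q1 : 'M[C]_m1) (Q2 : 'M[C]_m2) e1 e2 :
  udiag (block_mx Q1 0 0 Q2) (row_mx e1 e2) = block_mx (udiag Q1 e1) 0 0 (udiag Q2 e2).
Proof.
rewrite !udiagE trmxC_block !trmxC0 diag_mx_row !mulmx_block.
by rewrite !(mulmx0, mul0mx, addr0, add0r).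
Qed.

End UnitaryDiag.

Section Positivity.
Variable C : numClosedFieldType.
Implicit Types (m : nat).

Lemma pd_qform m (A : 'M[C]_m) v : pd_mx A -> v != 0 -> 0 < qform A v.
Proof. by move=> [_ posA] /posA. Qed.

Lemma psd_qform m (A : 'M[C]_m) v : psd_mx A -> 0 <= qform A v.
Proof. by move=> [_ nnegA]; apply: nnegA. Qed.

Lemma loewner_qform m (A B : 'M[C]_m) v : loewner_le A B -> qform A v <= qform B v.
Proof. by move/(psd_qform v); rewrite qformB subr_ge0. Qed.

Lemma pd_psd m (A : 'M[C]_m) : pd_mx A -> psd_mx A.
Proof.
move=> [hA posA]; split=> // v; have [->|v0] := eqVneq v 0.
  by rewrite !mul0mx mxE.
exact/ltW/posA.
Qed.

Lemma pd_add_psd m (A B : 'M[C]_m) : pd_mx A -> psd_mx B -> pd_mx (A + B).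
Proof.
move=> [hA posA] [hB nnegB]; split.
  by move: hA hB; rewrite /hermitian_mx /adjmx trmxC_add => -> ->.
move=> v v0; rewrite /adjmx -/(qform (A + B) v) qformD.
by apply: ltr_pwDl; [apply: posA | apply: nnegB].
Qed.

Lemma pd_add m (A B : 'M[C]_m) : pd_mx A -> pd_mx B -> pd_mx (A + B).
Proof. by move=> pdA /pd_psd; apply: pd_add_psd. Qed.

Lemma psd_scale m (A : 'M[C]_m) c : 0 <= c -> psd_mx A -> psd_mx (c *: A).
Proof.
move=> c0 [hA nnegA]; split.
  by move: hA; rewrite /hermitian_mx /adjmx trmxC_scale geC0_conj // => ->.
move=> v; rewrite /adjmx -/(qform _ v) qformZ.
by apply: mulr_ge0 => //; apply: nnegA.
Qed.

Lemma pd_scale m (A : 'M[C]_m) c : 0 < c -> pd_mx A -> pd_mx (c *: A).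
Proof.
move=> c0 [hA posA]; split.
  by move: hA; rewrite /hermitian_mx /adjmx trmxC_scale geC0_conj ?ltW // => ->.
move=> v v0; rewrite /adjmx -/(qform _ v) qformZ.
by apply: mulr_gt0 => //; apply: posA.
Qed.

Lemma psd_conj m p (H : 'M[C]_(p, m)) (A : 'M[C]_p) :
  psd_mx A -> psd_mx (H^t* *m A *m H).
Proof.
move=> [hA nnegA]; split.
  by move: hA; rewrite /hermitian_mx /adjmx !trmxC_mul trmxCK mulmxA => ->.
by move=> v; rewrite /adjmx -/(qform _ v) qform_conj; apply: nnegA.
Qed.

Lemma pd_conj m (H H' A : 'M[C]_m) :
  H *m H' = 1%:M -> pd_mx A -> pd_mx (H^t* *m A *m H).
Proof.
move=> HH' pdA; have [hA _] := psd_conj H (pd_psd pdA); split=> // v v0.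
rewrite /adjmx -/(qform _ v) qform_conj; apply: pd_qform => //.
apply: contra v0 => /eqP vH0; apply/eqP.
by rewrite -[v]mulmx1 -trmxC1 -(mulmx1C HH') trmxC_mul mulmxA vH0 mul0mx.
Qed.

Lemma pd_drsub m1 m2 (A : 'M[C]_(m1 + m2)) : pd_mx A -> pd_mx (drsubmx A).
Proof.
move=> [hA posA]; split.
  by move: hA; rewrite /hermitian_mx /adjmx => hA; rewrite trmx_drsub map_drsubmx hA.
move=> v v0; rewrite /adjmx -/(qform _ v) -qform_0row; apply: posA.
by apply: contra v0; rewrite -row_mx0 => /eqP /eq_row_mx [_ ->].
Qed.

Lemma pd_ulsub m1 m2 (A : 'M[C]_(m1 + m2)) : pd_mx A -> pd_mx (ulsubmx A).
Proof.
move=> [hA posA]; split.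
  by move: hA; rewrite /hermitian_mx /adjmx => hA; rewrite trmx_ulsub map_ulsubmx hA.
move=> v v0; rewrite /adjmx -/(qform _ v) -qform_row0; apply: posA.
by apply: contra v0; rewrite -row_mx0 => /eqP /eq_row_mx [-> _].
Qed.

Lemma hermitian_udiag m (Q : 'M[C]_m) (e : 'rV[C]_m) : (forall k, 0 <= e 0 k) ->
  (udiag Q e)^t* = udiag Q e.
Proof.
by move=> e_ge0; rewrite trmxC_udiag; apply: eq_udiag => k; rewrite mxE geC0_conj.
Qed.

Lemma psd_udiag m (Q : 'M[C]_m) (e : 'rV[C]_m) :
  (forall k, 0 <= e 0 k) -> psd_mx (udiag Q e).
Proof.
move=> e_ge0; split; first exact: hermitian_udiag.
move=> v; rewrite /adjmx -/(qform _ v) qform_udiag.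
by apply: sumr_ge0 => k _; apply: mulr_ge0; [apply: e_ge0 | apply: mul_conjC_ge0].
Qed.

Lemma pd_udiag m (Q : 'M[C]_m) (e : 'rV[C]_m) : Q \is unitarymx -> (forall k, 0 < e 0 k) ->
  pd_mx (udiag Q e).
Proof.
move=> uQ e_gt0; have [hA _] := psd_udiag Q (fun k => ltW (e_gt0 k)); split=> // v v0.
rewrite /adjmx -/(qform _ v) qform_udiag; set w := v *m Q^t*.
have /rV0Pn[k wk] : w != 0.
  apply: contra v0 => /eqP w0; apply/eqP.
  by rewrite -[v]mulmx1 -(unitary_mulCmx uQ) mulmxA -/w w0 mul0mx.
rewrite (bigD1 k) //=; apply: ltr_pwDl.
  by apply: mulr_gt0; [apply: e_gt0 | rewrite mul_conjC_gt0].
apply: sumr_ge0 => i _; apply: mulr_ge0; [exact: ltW | exact: mul_conjC_ge0].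
Qed.

End Positivity.

Section FunctionalCalculus.
Variable C : numClosedFieldType.
Implicit Types (m : nat) (f g h : C -> C).

Lemma udiag_normal m (Q : 'M[C]_m) (e : 'rV[C]_m) : Q \is unitarymx ->
  udiag Q e \is normalmx.
Proof.
move=> uQ; apply/normalmxP; rewrite trmxC_udiag.
by rewrite !(udiagM (c := \row_k (e 0 k * (e 0 k)^*))) // => k; rewrite !mxE // mulrC.
Qed.

Lemma udiag_spectral m (A : 'M[C]_m) : A \is normalmx ->
  A = udiag (spectralmx A) (spectral_diag A).
Proof.
by move/orthomx_spectralP; rewrite invmx_unitary ?spectral_unitarymx // udiagE.
Qed.

Lemma pd_normal m (A : 'M[C]_m) : pd_mx A -> A \is normalmx.
Proof. by move=> [hA _]; apply/normalmxP; move: hA; rewrite /hermitian_mx /adjmx => ->. Qed.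

Lemma spectral_diag_gt0 m (A : 'M[C]_m) k : pd_mx A -> 0 < spectral_diag A 0 k.
Proof.
move=> pdA; set P := spectralmx A; have uP : P \is unitarymx := spectral_unitarymx A.
pose v : 'rV[C]_m := delta_mx 0 k *m P.
have vP : v *m P^t* = delta_mx 0 k by rewrite -mulmxA unitary_mulmxC // mulmx1.
have v0 : v != 0.
  apply/eqP => v0; move/rowP: vP => /(_ k).
  by rewrite v0 mul0mx !mxE !eqxx => /eqP; rewrite eq_sym oner_eq0.
have := pd_qform pdA v0; rewrite {1}(udiag_spectral (pd_normal pdA)) qform_udiag -/P vP.
rewrite (bigD1 k) //= big1 ?addr0 => [|j /negbTE jk]; last by rewrite mxE jk mul0r mulr0.
by rewrite mxE !eqxx conjC1 !mulr1.
Qed.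

Lemma mxfunE f m (A : 'M[C]_m) :
  mxfun f A = udiag (spectralmx A) (map_mx f (spectral_diag A)).
Proof. by rewrite /mxfun invmx_unitary ?spectral_unitarymx // udiagE. Qed.

Lemma diag_mx_intertwine f m (M : 'M[C]_m) (e d : 'rV[C]_m) :
  diag_mx e *m M = M *m diag_mx d ->
  diag_mx (map_mx f e) *m M = M *m diag_mx (map_mx f d).
Proof.
move=> eM; apply/matrixP=> i j; move/matrixP: eM => /(_ i j).
rewrite !mul_diag_mx !mul_mx_diag !mxE.
have [->|Mij] := eqVneq (M i j) 0; first by rewrite !mulr0 !mul0r.
by rewrite mulrC => /(mulfI Mij) ->; rewrite mulrC.
Qed.

(* [mxfun] is defined through the library's choice of a diagonalization;
   it does not depend on that choice. *)
Lemma mxfun_udiag f m (Q : 'M[C]_m) (e : 'rV[C]_m) : Q \is unitarymx ->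
  mxfun f (udiag Q e) = udiag Q (map_mx f e).
Proof.
move=> uQ; set A := udiag Q e; rewrite mxfunE.
have eA := udiag_spectral (udiag_normal e uQ); rewrite -/A in eA.
set P := spectralmx A in eA *; set d := spectral_diag A in eA *.
have uP : P \is unitarymx := spectral_unitarymx A.
set M := Q *m P^t*.
have eM : diag_mx e *m M = M *m diag_mx d.
  have : Q *m A *m P^t* = Q *m udiag P d *m P^t* by rewrite -eA.
  rewrite /A !udiagE !mulmxA unitary_mulmxC // mul1mx -!mulmxA unitary_mulmxC //.
  by rewrite mulmx1 !mulmxA.
have feM := diag_mx_intertwine f eM.
have MP : M *m P = Q by rewrite -mulmxA unitary_mulCmx // mulmx1.
rewrite !udiagE -{2}MP mulmxA -(mulmxA (Q^t*)) feM !mulmxA unitary_mulCmx //.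
by rewrite mul1mx.
Qed.

Lemma mxfunM f g m (A : 'M[C]_m) :
  mxfun f A *m mxfun g A = mxfun (fun t => f t * g t) A.
Proof. by rewrite !mxfunE; apply: udiagM (spectral_unitarymx A) _ => k; rewrite !mxE. Qed.

Lemma mxfunZl f c m (A : 'M[C]_m) : mxfun (fun t => c * f t) A = c *: mxfun f A.
Proof. by rewrite !mxfunE udiagZ; apply: eq_udiag => k; rewrite !mxE. Qed.

Lemma mxfun_cst1 m (A : 'M[C]_m) : mxfun (fun => 1) A = 1%:M.
Proof. by rewrite mxfunE; apply: udiag1 (spectral_unitarymx A) _ => k; rewrite mxE. Qed.

Lemma mxfun_id m (A : 'M[C]_m) : A \is normalmx -> mxfun id A = A.
Proof.
by move=> nA; rewrite mxfunE {3}(udiag_spectral nA); apply: eq_udiag => k; rewrite mxE.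
Qed.

Lemma eq_mxfun_pd f g m (A : 'M[C]_m) : pd_mx A ->
  (forall t, 0 < t -> f t = g t) -> mxfun f A = mxfun g A.
Proof.
move=> pdA fg; rewrite !mxfunE; apply: eq_udiag => k.
by rewrite !mxE fg // spectral_diag_gt0.
Qed.


Lemma mxfunM_pd f g h m (A : 'M[C]_m) : pd_mx A ->
  (forall t, 0 < t -> f t * g t = h t) -> mxfun f A *m mxfun g A = mxfun h A.
Proof. by move=> pdA fgh; rewrite mxfunM; apply: eq_mxfun_pd. Qed.

Lemma mxfun_scale f c m (A : 'M[C]_m) : A \is normalmx ->
  mxfun f (c *: A) = mxfun (fun t => f (c * t)) A.
Proof.
move=> nA; rewrite {1}(udiag_spectral nA) udiagZ mxfun_udiag ?spectral_unitarymx //.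
by rewrite mxfunE; apply: eq_udiag => k; rewrite !mxE.
Qed.

Lemma hermitian_mxfun f m (A : 'M[C]_m) : pd_mx A ->
  (forall t, 0 < t -> 0 <= f t) -> (mxfun f A)^t* = mxfun f A.
Proof.
move=> pdA f_ge0; rewrite mxfunE hermitian_udiag // => k.
by rewrite mxE f_ge0 // spectral_diag_gt0.
Qed.

Lemma pd_mxfun f m (A : 'M[C]_m) : pd_mx A ->
  (forall t, 0 < t -> 0 < f t) -> pd_mx (mxfun f A).
Proof.
move=> pdA f_gt0; rewrite mxfunE; apply: pd_udiag (spectral_unitarymx A) _ => k.
by rewrite mxE f_gt0 // spectral_diag_gt0.
Qed.

Lemma ler_qform_mxfun f g m (A : 'M[C]_m) v : pd_mx A ->
  (forall t, 0 < t -> f t <= g t) -> qform (mxfun f A) v <= qform (mxfun g A) v.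
Proof.
move=> pdA fg; rewrite !mxfunE !qform_udiag; apply: ler_sum => k _; rewrite !mxE.
by apply: ler_wpM2r; [apply: mul_conjC_ge0 | apply: fg; apply: spectral_diag_gt0].
Qed.

Lemma mxfun_block f m1 m2 (A : 'M[C]_m1) (D : 'M[C]_m2) :
  A \is normalmx -> D \is normalmx ->
  mxfun f (block_mx A 0 0 D) = block_mx (mxfun f A) 0 0 (mxfun f D).
Proof.
move=> nA nD; rewrite {1}(udiag_spectral nA) {1}(udiag_spectral nD) -udiag_block.
rewrite mxfun_udiag ?unitary_block ?spectral_unitarymx // map_row_mx.
by rewrite udiag_block -!mxfunE.
Qed.

Lemma mxfun_conj f m (U A : 'M[C]_m) : U \is unitarymx -> A \is normalmx ->
  mxfun f (U^t* *m A *m U) = U^t* *m mxfun f A *m U.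
Proof.
move=> uU nA; have uPU := mul_unitarymx (spectral_unitarymx A) uU.
have conjE e : U^t* *m udiag (spectralmx A) e *m U = udiag (spectralmx A *m U) e.
  by rewrite !udiagE trmxC_mul !mulmxA.
by rewrite {1}(udiag_spectral nA) conjE mxfun_udiag // -conjE -mxfunE.
Qed.

Lemma pd_block m1 m2 (X1 : 'M[C]_m1) (X2 : 'M[C]_m2) :
  pd_mx X1 -> pd_mx X2 -> pd_mx (block_mx X1 0 0 X2).
Proof.
move=> pd1 pd2; rewrite (udiag_spectral (pd_normal pd1)) (udiag_spectral (pd_normal pd2)).
rewrite -udiag_block; apply: pd_udiag; first by rewrite unitary_block ?spectral_unitarymx.
by move=> k; case: (split_ordP k) => j ->; rewrite ?row_mxEl ?row_mxEr spectral_diag_gt0.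
Qed.

End FunctionalCalculus.

Section OperatorMonotone.
Variables (C : numClosedFieldType) (f : C -> C).
Hypothesis f_opmono : operator_monotone f.

Lemma opmono_qform m (A B : 'M[C]_m) v : pd_mx A -> pd_mx B -> loewner_le A B ->
  qform (mxfun f A) v <= qform (mxfun f B) v.
Proof. by move=> pdA pdB AB; apply/loewner_qform/f_opmono. Qed.

Lemma opmono_ler a b : 0 < a -> a <= b -> f a <= f b.
Proof.
move=> a_gt0 ab; have b_gt0 := lt_le_trans a_gt0 ab.
have u1 : (1%:M : 'M[C]_1) \is unitarymx by apply/unitarymxP; rewrite trmxC1 mulmx1.
pose cst c : 'M[C]_1 := udiag 1%:M (const_mx c).
have pd_cst c : 0 < c -> pd_mx (cst c) by move=> c0; apply: pd_udiag => // k; rewrite mxE.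
have ab_cst : loewner_le (cst a) (cst b).
  rewrite /loewner_le -scaleN1r udiagZ udiagD; apply: psd_udiag => k.
  by rewrite !mxE mulN1r subr_ge0.
have := opmono_qform (const_mx 1) (pd_cst _ a_gt0) (pd_cst _ b_gt0) ab_cst.
by rewrite !mxfun_udiag // !qform_udiag trmxC1 mulmx1 !big_ord1 !mxE conjC1 !mulr1.
Qed.

(* By the symmetry [f t = t f (1/t)], [f t / t = f (1/t)] is nonincreasing. *)
Lemma opmono_sym_subhom : (forall t, 0 < t -> f t = t * f t^-1) ->
  forall c t, 1 <= c -> 0 < t -> f (c * t) <= c * f t.
Proof.
move=> f_sym c t c1 t_gt0; have c_gt0 := lt_le_trans ltr01 c1.
have ct_gt0 : 0 < c * t by rewrite mulr_gt0.
rewrite (f_sym _ ct_gt0) [X in _ <= _ * X](f_sym _ t_gt0) mulrA.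
apply: ler_wpM2l; first by rewrite ltW.
apply: opmono_ler; first by rewrite invr_gt0.
by rewrite lef_pV2 ?posrE // ler_peMl // ltW.
Qed.

End OperatorMonotone.

Lemma ler_of_forall_scale (C : numClosedFieldType) (a b : C) : 0 <= b ->
  (forall e, 0 < e -> a <= (1 + e) * b) -> a <= b.
Proof.
move=> b_ge0 ab; have b1_gt0 : 0 < b + 1 by rewrite ltr_wpDl.
have a_real : a \is Num.real.
  by have /ler_real -> := ab 1 ltr01; rewrite ger0_real // mulr_ge0 // addr_ge0.
rewrite (real_leNgt a_real (ger0_real b_ge0)); apply/negP => ba.
set e := (a - b) / (b + 1); have e_gt0 : 0 < e by rewrite divr_gt0 // subr_gt0.
have eb_lt : e * b < a - b.
  rewrite /e mulrAC -mulrA -[X in _ < X]mulr1 ltr_pM2l ?subr_gt0 //.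
  by rewrite ltr_pdivrMr // mul1r ltrDl.
have := le_lt_trans (ab e e_gt0); rewrite mulrDl mul1r.
by rewrite ltrBrDl in eb_lt => /(_ _ eb_lt); rewrite ltxx.
Qed.

Section SchurComplement.
Variable C : numClosedFieldType.

(* For [M = [Z B; B^* E]] and [e > 0] the matrix [[(1+e) Z, 0; 0, D]], with
   [D = E + e^-1 B^* Z^-1 B], dominates [M]: the difference is
   [e^-1 H^* Z^-1 H] for [H = [e Z, -B]]. *)
Lemma pd_block_dominate m1 m2 (M : 'M[C]_(m1 + m2)) e : pd_mx M -> 0 < e ->
  exists2 D, pd_mx D & loewner_le M (block_mx ((1 + e) *: ulsubmx M) 0 0 D).
Proof.
move=> pdM e_gt0; have e0 : e != 0 by rewrite gt_eqF.
set Z := ulsubmx M; have pdZ : pd_mx Z := pd_ulsub pdM.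
set Zi := mxfun GRing.inv Z.
have ZZi : Z *m Zi = 1%:M.
  rewrite -{1}(mxfun_id (pd_normal pdZ)) -(mxfun_cst1 Z).
  by apply: mxfunM_pd => // t t_gt0; rewrite mulfV ?gt_eqF.
have ZiZ : Zi *m Z = 1%:M := mulmx1C ZZi.
have hZ : Z^t* = Z by case: pdZ.
have pdZi : pd_mx Zi by apply: pd_mxfun => // t; rewrite invr_gt0.
set B := ursubmx M; set D := drsubmx M + e^-1 *: (B^t* *m Zi *m B).
set M' := block_mx ((1 + e) *: Z) 0 0 D; set H := row_mx (e *: Z) (- B).
have hdl : dlsubmx M = B^t*.
  by case: pdM => hM _; rewrite -{1}hM /adjmx -map_dlsubmx -trmx_ursub.
have M'M : M' - M = e^-1 *: (H^t* *m Zi *m H).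
  rewrite -[X in _ - X](submxK M) -/Z hdl /M' /H trmxC_row trmxC_scale trmxC_opp hZ.
  rewrite geC0_conj ?ltW // mul_col_mx mul_col_row opp_block_mx add_block_mx scale_block_mx.
  congr block_mx.
  - rewrite -scalemxAl ZZi -scalemxAl mul1mx !scalerA scalerDl scale1r.
    by rewrite addrAC subrr add0r mulVf // mul1r.
  - by rewrite -scalemxAl ZZi -scalemxAl mul1mx scalerA mulVf // scale1r add0r.
  - by rewrite -scalemxAr -mulmxA ZiZ mulmx1 scalerA mulVf // scale1r add0r.
  - by rewrite /D addrAC subrr add0r mulNmx mulmxN mulNmx opprK.
have psdM'M : psd_mx (M' - M).
  by rewrite M'M; apply: psd_scale; rewrite ?invr_ge0 ?ltW //; apply/psd_conj/pd_psd.
exists D => //; have : pd_mx M' by rewrite -(subrK M M') addrC; apply: pd_add_psd.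
by move/pd_drsub; rewrite block_mxKdr.
Qed.

End SchurComplement.

Section OperatorJensen.
Variables (C : numClosedFieldType) (f : C -> C).
Hypotheses (f_gt0 : forall t, 0 < t -> 0 < f t) (f_opmono : operator_monotone f).
Hypothesis f_subhom : forall c t, 1 <= c -> 0 < t -> f (c * t) <= c * f t.

(* Hansen's inequality [P f(M) P <= f(P M P)], [P] the first-block projection. *)
Lemma opmono_ulsub m1 m2 (M : 'M[C]_(m1 + m2)) x : pd_mx M ->
  qform (ulsubmx (mxfun f M)) x <= qform (mxfun f (ulsubmx M)) x.
Proof.
move=> pdM; set Z := ulsubmx M; have pdZ : pd_mx Z := pd_ulsub pdM.
apply: ler_of_forall_scale => [|e e_gt0].
  by apply/psd_qform/pd_psd/pd_mxfun.
have c1 : 1 <= 1 + e by rewrite lerDl ltW.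
have [D pdD MM'] := pd_block_dominate pdM e_gt0; rewrite -/Z in MM'.
have pdeZ : pd_mx ((1 + e) *: Z) by apply: pd_scale => //; apply: lt_le_trans c1.
have pdM' : pd_mx (block_mx ((1 + e) *: Z) 0 0 D) by apply: pd_block.
rewrite -qform_row0 (le_trans (opmono_qform f_opmono _ pdM pdM' MM')) //.
rewrite mxfun_block ?pd_normal // qform_row0 block_mxKul.
rewrite mxfun_scale ?pd_normal // -qformZ -mxfunZl.
by apply: ler_qform_mxfun => // t t_gt0; apply: f_subhom.
Qed.

Lemma opmono_jensen m1 m2 (U : 'M[C]_(m1 + m2)) (X1 : 'M[C]_m1) (X2 : 'M[C]_m2) x :
  U \is unitarymx -> pd_mx X1 -> pd_mx X2 ->
  qform (ulsubmx (U^t* *m block_mx (mxfun f X1) 0 0 (mxfun f X2) *m U)) x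
  <= qform (mxfun f (ulsubmx (U^t* *m block_mx X1 0 0 X2 *m U))) x.
Proof.
move=> uU pd1 pd2; have pdX := pd_block pd1 pd2.
rewrite -mxfun_block ?pd_normal // -mxfun_conj ?pd_normal //.
by apply/opmono_ulsub/(pd_conj (unitary_mulmxC uU)).
Qed.

End OperatorJensen.

Section SquareRoot.
Variable C : numClosedFieldType.
Implicit Types (m : nat).

(* Locked so that rewriting with [mulmxA] does not look inside [mxfun]. *)
Fact sqrtmx_key : unit. Proof. by []. Qed.
Fact isqrtmx_key : unit. Proof. by []. Qed.
Definition sqrtmx m (A : 'M[C]_m) := locked_with sqrtmx_key (mxfun sqrtC A).
Definition isqrtmx m (A : 'M[C]_m) :=
  locked_with isqrtmx_key (mxfun (fun t => (sqrtC t)^-1) A).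

Lemma sqrtmxE m (A : 'M[C]_m) : sqrtmx A = mxfun sqrtC A.
Proof. by rewrite /sqrtmx unlock. Qed.

Lemma isqrtmxE m (A : 'M[C]_m) : isqrtmx A = mxfun (fun t => (sqrtC t)^-1) A.
Proof. by rewrite /isqrtmx unlock. Qed.

Variables (m : nat) (A : 'M[C]_m).
Hypothesis pdA : pd_mx A.

Lemma sqrtmxK : sqrtmx A *m sqrtmx A = A.
Proof.
rewrite sqrtmxE -{3}(mxfun_id (pd_normal pdA)).
by apply: mxfunM_pd => // t _; rewrite -expr2 sqrtCK.
Qed.

Lemma sqrtmxV : sqrtmx A *m isqrtmx A = 1%:M.
Proof.
rewrite sqrtmxE isqrtmxE -(mxfun_cst1 A); apply: mxfunM_pd => // t t_gt0.
by rewrite mulfV // gt_eqF // sqrtC_gt0.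
Qed.

Lemma isqrtmxV : isqrtmx A *m sqrtmx A = 1%:M.
Proof. exact: mulmx1C sqrtmxV. Qed.

Lemma isqrtmxK : isqrtmx A *m isqrtmx A = mxfun GRing.inv A.
Proof. by rewrite isqrtmxE; apply: mxfunM_pd => // t _; rewrite -invfM -expr2 sqrtCK. Qed.

Lemma isqrtmx_conj : isqrtmx A *m A *m isqrtmx A = 1%:M.
Proof. by rewrite -{2}sqrtmxK mulmxA isqrtmxV mul1mx sqrtmxV. Qed.

Lemma trmxC_sqrtmx : (sqrtmx A)^t* = sqrtmx A.
Proof. by rewrite sqrtmxE; apply: hermitian_mxfun => // t t_gt0; rewrite sqrtC_ge0 ltW. Qed.

Lemma trmxC_isqrtmx : (isqrtmx A)^t* = isqrtmx A.
Proof.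
by rewrite isqrtmxE; apply: hermitian_mxfun => // t t_gt0; rewrite invr_ge0 sqrtC_ge0 ltW.
Qed.

Lemma pd_isqrt_conj (L : 'M[C]_m) : pd_mx L -> pd_mx (isqrtmx A *m L *m isqrtmx A).
Proof. by move=> pdL; rewrite -{1}trmxC_isqrtmx; apply: pd_conj isqrtmxV pdL. Qed.

Lemma sqrtmx_conjK (L : 'M[C]_m) :
  sqrtmx A *m (isqrtmx A *m L *m isqrtmx A) *m sqrtmx A = L.
Proof. by rewrite !mulmxA sqrtmxV mul1mx -mulmxA isqrtmxV mulmx1. Qed.

Lemma qform_sqrtmx_conj (M : 'M[C]_m) v :
  qform (sqrtmx A *m M *m sqrtmx A) v = qform M (v *m sqrtmx A).
Proof. by have := qform_conj (sqrtmx A) M v; rewrite trmxC_sqrtmx. Qed.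

Lemma qform_isqrtmx_conj (M : 'M[C]_m) v :
  qform (isqrtmx A *m M *m isqrtmx A) (v *m sqrtmx A) = qform M v.
Proof.
have := qform_conj (isqrtmx A) M (v *m sqrtmx A).
by rewrite trmxC_isqrtmx -(mulmxA v) sqrtmxV mulmx1.
Qed.

End SquareRoot.

Section Perspective.
Variable C : numClosedFieldType.

Definition perspective (f : C -> C) m (L R : 'M[C]_m) : 'M[C]_m :=
  sqrtmx R *m mxfun f (isqrtmx R *m L *m isqrtmx R) *m sqrtmx R.

Lemma perspective_udiag f m (Q : 'M[C]_m) (l r : 'rV[C]_m) : Q \is unitarymx ->
  (forall k, 0 < r 0 k) ->
  perspective f (udiag Q l) (udiag Q r) = udiag Q (\row_k (r 0 k * f (l 0 k / r 0 k))).
Proof.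
move=> uQ r_gt0; rewrite /perspective sqrtmxE isqrtmxE !mxfun_udiag //.
rewrite (udiagM (c := \row_k (l 0 k / sqrtC (r 0 k)))) // => [|k]; last first.
  by rewrite !mxE mulrC.
rewrite (udiagM (c := \row_k (l 0 k / r 0 k))) // => [|k]; last first.
  by rewrite !mxE -mulrA -invfM -expr2 sqrtCK.
rewrite mxfun_udiag // (udiagM (c := \row_k (sqrtC (r 0 k) * f (l 0 k / r 0 k)))) //.
  by apply: udiagM => // k; rewrite !mxE mulrAC -expr2 sqrtCK mulrC.
by move=> k; rewrite !mxE.
Qed.

Lemma perspectiveZ f m c (L R : 'M[C]_m) : 0 < c -> pd_mx R ->
  perspective f (c *: L) (c *: R) = c *: perspective f L R.
Proof.
move=> c_gt0 pdR; have sc_gt0 : 0 < sqrtC c by rewrite sqrtC_gt0.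
have sqrtCM_gt0 t : 0 < t -> sqrtC (c * t) = sqrtC c * sqrtC t.
  by move=> t_gt0; rewrite sqrtCM // nnegrE ltW.
have sqrtZ : sqrtmx (c *: R) = sqrtC c *: sqrtmx R.
  rewrite !sqrtmxE mxfun_scale ?pd_normal // -mxfunZl.
  by apply: eq_mxfun_pd => // t; apply: sqrtCM_gt0.
have isqrtZ : isqrtmx (c *: R) = (sqrtC c)^-1 *: isqrtmx R.
  rewrite !isqrtmxE mxfun_scale ?pd_normal // -mxfunZl.
  by apply: eq_mxfun_pd => // t t_gt0; rewrite sqrtCM_gt0 // invfM.
have ccc : (sqrtC c)^-1 * c * (sqrtC c)^-1 = 1.
  by rewrite mulrAC -invfM -expr2 sqrtCK mulVf // gt_eqF.
rewrite /perspective sqrtZ isqrtZ.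
have -> : (sqrtC c)^-1 *: isqrtmx R *m (c *: L) *m ((sqrtC c)^-1 *: isqrtmx R) =
          isqrtmx R *m L *m isqrtmx R.
  by rewrite -!scalemxAr -!scalemxAl !scalerA ccc scale1r.
by rewrite -scalemxAr -!scalemxAl scalerA -expr2 sqrtCK.
Qed.

Section Dilation.
Variables (m : nat) (R1 R2 : 'M[C]_m).
Hypotheses (pdR1 : pd_mx R1) (pdR2 : pd_mx R2).

(* With [K_i = R_i^(1/2) (R1 + R2)^(-1/2)] we have [K1^* K1 + K2^* K2 = 1];
   the second block column completes [[K1]; [K2]] to a unitary matrix. *)
Definition dilation : 'M[C]_(m + m) :=
  let N := isqrtmx (mxfun GRing.inv R1 + mxfun GRing.inv R2) in
  block_mx (sqrtmx R1 *m isqrtmx (R1 + R2)) (- (isqrtmx R1 *m N))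
           (sqrtmx R2 *m isqrtmx (R1 + R2)) (isqrtmx R2 *m N).

Lemma dilation_unitary : dilation \is unitarymx.
Proof.
have pdR : pd_mx (R1 + R2) := pd_add pdR1 pdR2.
set G := mxfun GRing.inv R1 + mxfun GRing.inv R2.
have pdG : pd_mx G.
  by apply: pd_add; apply: pd_mxfun => // t; rewrite invr_gt0.
have hS1 := trmxC_sqrtmx pdR1; have hS2 := trmxC_sqrtmx pdR2.
have hSi1 := trmxC_isqrtmx pdR1; have hSi2 := trmxC_isqrtmx pdR2.
have hSi := trmxC_isqrtmx pdR; have hN := trmxC_isqrtmx pdG.
apply/unitarymxP/mulmx1C; rewrite /dilation /= trmxC_block mulmx_block.
rewrite (trmxC_opp (isqrtmx R1 *m _)) (trmxC_mul_herm hS1 hSi) (trmxC_mul_herm hS2 hSi).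
rewrite (trmxC_mul_herm hSi1 hN) (trmxC_mul_herm hSi2 hN) [1%:M]scalar_mx_block.
congr block_mx.
- rewrite !mulmxA -(mulmxA _ (sqrtmx R1) (sqrtmx R1)) -(mulmxA _ (sqrtmx R2) (sqrtmx R2)).
  by rewrite (sqrtmxK pdR1) (sqrtmxK pdR2) -mulmxDl -mulmxDr (isqrtmx_conj pdR).
- rewrite (mulmxN (isqrtmx (R1 + R2) *m sqrtmx R1)) !mulmxA.
  rewrite -(mulmxA _ (sqrtmx R1) (isqrtmx R1)) -(mulmxA _ (sqrtmx R2) (isqrtmx R2)).
  by rewrite (sqrtmxV pdR1) (sqrtmxV pdR2) !mulmx1 addNr.
- rewrite (mulNmx (isqrtmx G *m isqrtmx R1)) !mulmxA.
  rewrite -(mulmxA _ (isqrtmx R1) (sqrtmx R1)) -(mulmxA _ (isqrtmx R2) (sqrtmx R2)).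
  by rewrite (isqrtmxV pdR1) (isqrtmxV pdR2) !mulmx1 addNr.
- rewrite (mulNmx (isqrtmx G *m isqrtmx R1)) (mulmxN (isqrtmx G *m isqrtmx R1)).
  rewrite opprK !mulmxA.
  rewrite -(mulmxA _ (isqrtmx R1) (isqrtmx R1)) -(mulmxA _ (isqrtmx R2) (isqrtmx R2)).
  by rewrite (isqrtmxK pdR1) (isqrtmxK pdR2) -mulmxDl -mulmxDr (isqrtmx_conj pdG).
Qed.

Lemma ulsub_dilation (X1 X2 : 'M[C]_m) :
  ulsubmx (dilation^t* *m block_mx X1 0 0 X2 *m dilation) =
  isqrtmx (R1 + R2) *m (sqrtmx R1 *m X1 *m sqrtmx R1 + sqrtmx R2 *m X2 *m sqrtmx R2)
    *m isqrtmx (R1 + R2).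
Proof.
have hSi := trmxC_isqrtmx (pd_add pdR1 pdR2).
rewrite /dilation /= trmxC_block !mulmx_block block_mxKul !(mulmx0, mul0mx, addr0, add0r).
rewrite (trmxC_mul_herm (trmxC_sqrtmx pdR1) hSi) (trmxC_mul_herm (trmxC_sqrtmx pdR2) hSi).
by rewrite mulmxDr mulmxDl !mulmxA.
Qed.

End Dilation.

(* Hansen-Pedersen: [K1^* f(X1) K1 + K2^* f(X2) K2 <= f(K1^* X1 K1 + K2^* X2 K2)]
   for [K_i = R_i^(1/2) (R1 + R2)^(-1/2)] and [X_i = R_i^(-1/2) L_i R_i^(-1/2)]. *)
Lemma perspective_superadditive f m (L1 L2 R1 R2 : 'M[C]_m) v :
  (forall t, 0 < t -> 0 < f t) -> operator_monotone f ->
  (forall c t, 1 <= c -> 0 < t -> f (c * t) <= c * f t) ->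
  pd_mx L1 -> pd_mx L2 -> pd_mx R1 -> pd_mx R2 ->
  qform (perspective f L1 R1 + perspective f L2 R2) v
  <= qform (perspective f (L1 + L2) (R1 + R2)) v.
Proof.
move=> f_gt0 f_opmono f_subhom pdL1 pdL2 pdR1 pdR2.
have pdR : pd_mx (R1 + R2) := pd_add pdR1 pdR2.
have := opmono_jensen f_gt0 f_opmono f_subhom (v *m sqrtmx (R1 + R2))
  (dilation_unitary pdR1 pdR2) (pd_isqrt_conj pdR1 pdL1) (pd_isqrt_conj pdR2 pdL2).
rewrite !(ulsub_dilation pdR1 pdR2) (sqrtmx_conjK pdR1) (sqrtmx_conjK pdR2).
by rewrite (qform_isqrtmx_conj pdR) /perspective (qform_sqrtmx_conj pdR).
Qed.

End Perspective.

Section Kronecker.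
Variables (C : numClosedFieldType) (m n : nat).

Definition mxvec_unindex (c : 'I_(m * n)) : 'I_m * 'I_n :=
  enum_val (cast_ord (esym (mxvec_cast m n)) c).

Lemma mxvec_indexK i j : mxvec_unindex (mxvec_index i j) = (i, j).
Proof. by rewrite /mxvec_unindex cast_ordK enum_rankK. Qed.

Lemma eq_mxvec_index i j k l :
  (mxvec_index i j == mxvec_index k l :> 'I_(m * n)) = (i == k) && (j == l).
Proof.
apply/eqP/andP => [/(congr1 mxvec_unindex)|[/eqP -> /eqP ->] //].
by rewrite !mxvec_indexK => -[-> ->].
Qed.

Lemma sum_mxvec_index (F : 'I_(m * n) -> C) :
  \sum_c F c = \sum_i \sum_j F (mxvec_index i j).
Proof.
rewrite pair_big /= (reindex (uncurry (@mxvec_index m n))); last exact: curry_mxvec_bij.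
by apply: eq_bigr => -[].
Qed.

(* Indexed through [mxvec_index] (unlike [tensmx] of mxtens) so that
   [mxvec X *m kronmx A B = mxvec (A^T *m X *m B)]. *)
Definition kronmx (A : 'M[C]_m) (B : 'M[C]_n) : 'M[C]_(m * n) :=
  \matrix_(a, b) (A (mxvec_unindex a).1 (mxvec_unindex b).1 *
                  B (mxvec_unindex a).2 (mxvec_unindex b).2).

Lemma kronmxE A B i j k l :
  kronmx A B (mxvec_index i j) (mxvec_index k l) = A i k * B j l.
Proof. by rewrite mxE !mxvec_indexK. Qed.

Lemma kronmxM A B D E : kronmx A B *m kronmx D E = kronmx (A *m D) (B *m E).
Proof.
apply/matrixP => a b; case/mxvec_indexP: a => i j; case/mxvec_indexP: b => k l.
rewrite kronmxE !mxE sum_mxvec_index big_distrlr /=; apply: eq_bigr => p _.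
by apply: eq_bigr => q _; rewrite !kronmxE mulrACA.
Qed.

Lemma trmxC_kronmx A B : (kronmx A B)^t* = kronmx (A^t*) (B^t*).
Proof. by apply/matrixP => a b; rewrite !mxE rmorphM. Qed.

Lemma kronmx_diag (d : 'rV[C]_m) (e : 'rV[C]_n) :
  kronmx (diag_mx d) (diag_mx e) =
  diag_mx (\row_c (d 0 (mxvec_unindex c).1 * e 0 (mxvec_unindex c).2)).
Proof.
apply/matrixP => a b; case/mxvec_indexP: a => i j; case/mxvec_indexP: b => k l.
rewrite kronmxE !mxE eq_mxvec_index mxvec_indexK /=.
by case: (i =P k) => [->|]; case: (j =P l) => [->|]; rewrite ?mulr0 ?mul0r ?mulr1n.
Qed.

Lemma kronmx1 : kronmx 1%:M 1%:M = 1%:M.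
Proof.
apply/matrixP => a b; case/mxvec_indexP: a => i j; case/mxvec_indexP: b => k l.
rewrite kronmxE !mxE eq_mxvec_index.
by case: (i == k); case: (j == l); rewrite ?mulr1 ?mulr0.
Qed.

Lemma kronmx_unitary A B :
  A \is unitarymx -> B \is unitarymx -> kronmx A B \is unitarymx.
Proof.
by move=> uA uB; apply/unitarymxP; rewrite trmxC_kronmx kronmxM !unitary_mulmxC // kronmx1.
Qed.

Lemma kronmxDl a b (A B : 'M[C]_m) (D : 'M[C]_n) :
  kronmx (a *: A + b *: B) D = a *: kronmx A D + b *: kronmx B D.
Proof. by apply/matrixP => x y; rewrite !mxE mulrDl !mulrA. Qed.

Lemma kronmxDr a b (D : 'M[C]_m) (A B : 'M[C]_n) :
  kronmx D (a *: A + b *: B) = a *: kronmx D A + b *: kronmx D B.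
Proof. by apply/matrixP => x y; rewrite !mxE; ring. Qed.

Lemma mxvec_kronmx (X : 'M[C]_(m, n)) A B :
  mxvec X *m kronmx A B = mxvec (A^T *m X *m B).
Proof.
apply/rowP => c; case/mxvec_indexP: c => k l.
rewrite mxvecE !mxE sum_mxvec_index.
under eq_bigr do under eq_bigr do rewrite mxvecE kronmxE.
rewrite exchange_big /=; apply: eq_bigr => j _.
rewrite !mxE mulr_suml; apply: eq_bigr => i _.
by rewrite !mxE mulrA (mulrC (X i j)).
Qed.

End Kronecker.

Section LeftRightMultiplication.
Variables (C : numClosedFieldType) (n : nat).
Implicit Types (s P : 'M[C]_n) (d : 'rV[C]_n).

(* [Lmx s] and [Rmx s] are the matrices of [L_s : X |-> s X] and
   [R_s : X |-> X s] acting on [mxvec X] (see [mxvec_kronmx]). *)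
Definition Lmx s : 'M[C]_(n * n) := kronmx s^T 1%:M.
Definition Rmx s : 'M[C]_(n * n) := kronmx 1%:M s.

Definition kron_conjmx P : 'M[C]_(n * n) := kronmx (map_mx conjC P) P.

Lemma kron_conjmx_unitary P : P \is unitarymx -> kron_conjmx P \is unitarymx.
Proof. by move=> uP; rewrite kronmx_unitary // conjC_unitary. Qed.

Lemma trmxC_kron_conjmx P : (kron_conjmx P)^t* = kronmx P^T (P^t*).
Proof.
rewrite trmxC_kronmx; congr kronmx.
by apply/matrixP => i j; rewrite !mxE conjCK.
Qed.

Lemma mxvec_kron_conjmx P (Y : 'M[C]_n) :
  mxvec Y *m (kron_conjmx P)^t* = mxvec (P *m Y *m P^t*).
Proof. by rewrite trmxC_kron_conjmx mxvec_kronmx trmxK. Qed.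

Lemma Lmx_udiag P d : P \is unitarymx ->
  Lmx (udiag P d) = udiag (kron_conjmx P) (\row_c d 0 (mxvec_unindex c).1).
Proof.
move=> uP; rewrite [RHS]udiagE trmxC_kron_conjmx.
rewrite (_ : diag_mx _ = kronmx (diag_mx d) (diag_mx (const_mx 1))); last first.
  by rewrite kronmx_diag; congr diag_mx; apply/rowP => c; rewrite !mxE mulr1.
rewrite diag_const_mx !kronmxM mulmx1 unitary_mulCmx // /Lmx udiagE !trmx_mul tr_diag_mx.
by rewrite mulmxA; congr (kronmx (_ *m _) _); apply/matrixP => i j; rewrite !mxE.
Qed.

Lemma Rmx_udiag P d : P \is unitarymx ->
  Rmx (udiag P d) = udiag (kron_conjmx P) (\row_c d 0 (mxvec_unindex c).2).
Proof.
move=> uP; rewrite [RHS]udiagE trmxC_kron_conjmx.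
rewrite (_ : diag_mx _ = kronmx (diag_mx (const_mx 1)) (diag_mx d)); last first.
  by rewrite kronmx_diag; congr diag_mx; apply/rowP => c; rewrite !mxE mul1r.
rewrite diag_const_mx !kronmxM mulmx1 /Rmx udiagE; congr kronmx.
rewrite -[1%:M]trmx1 -(unitary_mulCmx uP) trmx_mul; congr (_ *m _).
by apply/matrixP => i j; rewrite !mxE.
Qed.

Lemma pd_Lmx s : pd_mx s -> pd_mx (Lmx s).
Proof.
move=> pds; have uP := spectral_unitarymx s.
rewrite (udiag_spectral (pd_normal pds)) Lmx_udiag //.
by apply: pd_udiag => [|c]; rewrite ?kron_conjmx_unitary // mxE spectral_diag_gt0.
Qed.

Lemma pd_Rmx s : pd_mx s -> pd_mx (Rmx s).
Proof.
move=> pds; have uP := spectral_unitarymx s.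
rewrite (udiag_spectral (pd_normal pds)) Rmx_udiag //.
by apply: pd_udiag => [|c]; rewrite ?kron_conjmx_unitary // mxE spectral_diag_gt0.
Qed.

Lemma LmxD a b s1 s2 : Lmx (a *: s1 + b *: s2) = a *: Lmx s1 + b *: Lmx s2.
Proof. by rewrite /Lmx linearD !linearZ /= kronmxDl. Qed.

Lemma RmxD a b s1 s2 : Rmx (a *: s1 + b *: s2) = a *: Rmx s1 + b *: Rmx s2.
Proof. exact: kronmxDr. Qed.

End LeftRightMultiplication.

Section PerspectiveForm.
Variables (C : numClosedFieldType) (f : C -> C).

(* [<Y, c(L_s, R_s)^-1 Y>], since [1 / c(x, y) = y f(x / y)]. *)
Definition perspective_form n (s Y : 'M[C]_n) : C :=
  qform (perspective f (Lmx s) (Rmx s)) (mxvec Y).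

Lemma perspective_formE n (s Y : 'M[C]_n) : pd_mx s ->
  let P := spectralmx s in let d := spectral_diag s in
  let Y' := P *m Y *m P^t* in
  perspective_form s Y =
  \sum_i \sum_j d 0 j * f (d 0 i / d 0 j) * (Y' i j * (Y' i j)^*).
Proof.
move=> pds P d Y'; have uP : P \is unitarymx := spectral_unitarymx s.
have es := udiag_spectral (pd_normal pds); rewrite -/P -/d in es.
rewrite /perspective_form es Lmx_udiag // Rmx_udiag // perspective_udiag.
- rewrite qform_udiag mxvec_kron_conjmx sum_mxvec_index.
  by apply: eq_bigr => i _; apply: eq_bigr => j _; rewrite !mxvecE !mxE !mxvec_indexK.
- exact: kron_conjmx_unitary.
- by move=> c; rewrite mxE spectral_diag_gt0.
Qed.

Hypotheses (f_gt0 : forall t, 0 < t -> 0 < f t) (f_opmono : operator_monotone f).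
Hypothesis f_subhom : forall c t, 1 <= c -> 0 < t -> f (c * t) <= c * f t.

Lemma perspective_form_concave n (s1 s2 Y : 'M[C]_n) lam :
  pd_mx s1 -> pd_mx s2 -> 0 < lam -> lam < 1 ->
  lam * perspective_form s1 Y + (1 - lam) * perspective_form s2 Y
  <= perspective_form (lam *: s1 + (1 - lam) *: s2) Y.
Proof.
move=> pd1 pd2 lam_gt0 lam_lt1; have lam'_gt0 : 0 < 1 - lam by rewrite subr_gt0.
rewrite /perspective_form LmxD RmxD -!qformZ -qformD.
rewrite -(perspectiveZ _ _ lam_gt0 (pd_Rmx pd1)) -(perspectiveZ _ _ lam'_gt0 (pd_Rmx pd2)).
apply: perspective_superadditive => //; apply: pd_scale => //.
- exact: pd_Lmx pd1.
- exact: pd_Lmx pd2.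
- exact: pd_Rmx pd1.
- exact: pd_Rmx pd2.
Qed.

End PerspectiveForm.

Section Variational.
Variables (C : numClosedFieldType) (f : C -> C).
Hypothesis f_gt0 : forall t, 0 < t -> 0 < f t.

Definition reinner n (X Y : 'M[C]_n) : C := \tr (Y^t* *m X) + \tr (X^t* *m Y).

Lemma mxtrace_trmxC_mul n (A B : 'M[C]_n) :
  \tr (A^t* *m B) = \sum_i \sum_j (A i j)^* * B i j.
Proof.
rewrite /mxtrace exchange_big /=; apply: eq_bigr => i _.
by rewrite mxE; apply: eq_bigr => j _; rewrite !mxE.
Qed.

Lemma mxtrace_unitary_conj n (P A B : 'M[C]_n) : P \is unitarymx ->
  \tr (A^t* *m B) = \tr ((P *m A *m P^t*)^t* *m (P *m B *m P^t*)).
Proof.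
move=> uP; have -> : (P *m A *m P^t*)^t* = P *m A^t* *m P^t*.
  by rewrite !trmxC_mul trmxCK mulmxA.
have -> : P *m A^t* *m P^t* *m (P *m B *m P^t*) = P *m (A^t* *m B) *m P^t*.
  by rewrite !mulmxA -(mulmxA _ (P^t*) P) unitary_mulCmx // mulmx1.
by rewrite [in RHS]mxtrace_mulC (mulmxA (P^t*)) unitary_mulCmx // mul1mx.
Qed.

Lemma reinnerE n (P X Y : 'M[C]_n) : P \is unitarymx ->
  let X' := P *m X *m P^t* in let Y' := P *m Y *m P^t* in
  reinner X Y = \sum_i \sum_j ((Y' i j)^* * X' i j + (X' i j)^* * Y' i j).
Proof.
move=> uP X' Y'.
rewrite /reinner (mxtrace_unitary_conj Y X uP) (mxtrace_unitary_conj X Y uP).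
by rewrite !mxtrace_trmxC_mul -big_split; apply: eq_bigr => i _; rewrite -big_split.
Qed.

Lemma reinnerDl n (X1 X2 Y : 'M[C]_n) a b : 0 <= a -> 0 <= b ->
  reinner (a *: X1 + b *: X2) Y = a * reinner X1 Y + b * reinner X2 Y.
Proof.
move=> a_ge0 b_ge0; rewrite /reinner trmxC_add !trmxC_scale !geC0_conj //.
by rewrite mulmxDr mulmxDl -!scalemxAr -!scalemxAl !mxtraceD !mxtraceZ; ring.
Qed.

Lemma chi2E n (rho sigma : 'M[C]_n) :
  let P := spectralmx sigma in let d := spectral_diag sigma in
  let X' := P *m (rho - sigma) *m P^t* in
  chi2 f rho sigma = \sum_i \sum_j (X' i j)^* * (MC_fun f (d 0 i) (d 0 j) * X' i j).
Proof.
move=> P d X'; have uP : P \is unitarymx := spectral_unitarymx sigma.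
rewrite /chi2 /monotone_metric /joint_fun /adjmx -/P -/d invmx_unitary //.
rewrite (mxtrace_unitary_conj _ _ uP) -/X'.
set M := \matrix_(i, j) _.
have -> : P *m (P^t* *m M *m P) *m P^t* = M.
  by rewrite !mulmxA unitary_mulmxC // mul1mx -mulmxA unitary_mulmxC // mulmx1.
rewrite mxtrace_trmxC_mul; apply: eq_bigr => i _.
by apply: eq_bigr => j _; rewrite [M i j]mxE.
Qed.

(* Completing the square; equality holds at [y = x / g]. *)
Lemma ler_complete_square (g x y : C) : 0 < g ->
  (y^* * x + x^* * y) - g * (y * y^*) <= x^* * (g^-1 * x).
Proof.
move=> g_gt0; have g0 : g != 0 by rewrite gt_eqF.
have gc : g^* = g by rewrite geC0_conj // ltW.
rewrite -subr_ge0.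
have -> : x^* * (g^-1 * x) - ((y^* * x + x^* * y) - g * (y * y^*))
          = g^-1 * ((x - g * y) * (x - g * y)^*).
  by rewrite rmorphB /= rmorphM /= gc; field.
by apply: mulr_ge0; [rewrite invr_ge0 ltW | apply: mul_conjC_ge0].
Qed.

Lemma chi2_ge_variational n (rho sigma Y : 'M[C]_n) : pd_mx sigma ->
  reinner (rho - sigma) Y - perspective_form f sigma Y <= chi2 f rho sigma.
Proof.
move=> pds; have uP := spectral_unitarymx sigma.
rewrite chi2E (reinnerE _ _ uP) perspective_formE // -sumrB; apply: ler_sum => i _.
rewrite -sumrB; apply: ler_sum => j _; rewrite /MC_fun; apply: ler_complete_square.
by rewrite mulr_gt0 ?f_gt0 ?divr_gt0 ?spectral_diag_gt0.
Qed.

Lemma chi2_variational n (rho sigma : 'M[C]_n) : pd_mx sigma ->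
  let Y := joint_fun (MC_fun f) sigma (rho - sigma) in
  chi2 f rho sigma = reinner (rho - sigma) Y - perspective_form f sigma Y.
Proof.
move=> pds Y; set P := spectralmx sigma; set d := spectral_diag sigma.
have uP : P \is unitarymx := spectral_unitarymx sigma.
rewrite chi2E (reinnerE _ _ uP) perspective_formE // -sumrB; apply: eq_bigr => i _.
rewrite -sumrB; apply: eq_bigr => j _.
have -> : P *m Y *m P^t* =
    \matrix_(i, j) (MC_fun f (d 0 i) (d 0 j) * (P *m (rho - sigma) *m P^t*) i j).
  rewrite /Y /joint_fun -/P -/d !invmx_unitary //.
  by rewrite !mulmxA unitary_mulmxC // mul1mx -mulmxA unitary_mulmxC // mulmx1.
rewrite mxE /MC_fun; set g := d 0 j * f (d 0 i / d 0 j).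
set x := (P *m (rho - sigma) *m P^t*) i j.
have g_gt0 : 0 < g by rewrite mulr_gt0 ?f_gt0 ?divr_gt0 ?spectral_diag_gt0.
have gc : g^-1^* = g^-1 by rewrite geC0_conj // invr_ge0 ltW.
by rewrite !rmorphM /= gc; field; rewrite gt_eqF.
Qed.

End Variational.

Theorem mainTheorem1 (C : numClosedFieldType) (f : C -> C) (n : nat)
  (hf : F_op f) (hn : (1 <= n)%N)
  (rho1 rho2 sigma1 sigma2 : 'M[C]_n)
  (hr1 : pd_density_mx rho1) (hr2 : pd_density_mx rho2)
  (hs1 : pd_density_mx sigma1) (hs2 : pd_density_mx sigma2)
  (lam : C) (hl0 : 0 <= lam) (hl1 : lam <= 1) :
  chi2 f (lam *: rho1 + (1 - lam) *: rho2) (lam *: sigma1 + (1 - lam) *: sigma2)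
  <= lam * chi2 f rho1 sigma1 + (1 - lam) * chi2 f rho2 sigma2.
Proof.
case: hf => f_gt0 f_opmono f_sym _; have f_subhom := opmono_sym_subhom f_opmono f_sym.
have [->|lam0] := eqVneq lam 0.
  by rewrite !scale0r !add0r subr0 !scale1r mul0r add0r mul1r.
have [->|lam1] := eqVneq lam 1.
  by rewrite !scale1r subrr !scale0r !addr0 mul0r addr0 mul1r.
have lam_gt0 : 0 < lam by rewrite lt_def lam0.
have lam_lt1 : lam < 1 by rewrite lt_def eq_sym lam1.
case: hs1 hs2 => [pds1 _] [pds2 _].
have pds : pd_mx (lam *: sigma1 + (1 - lam) *: sigma2).
  by apply: pd_add; apply: pd_scale; rewrite ?subr_gt0.
rewrite (chi2_variational f_gt0 _ pds); set Y := joint_fun _ _ _.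
have -> : lam *: rho1 + (1 - lam) *: rho2 - (lam *: sigma1 + (1 - lam) *: sigma2)
          = lam *: (rho1 - sigma1) + (1 - lam) *: (rho2 - sigma2).
  by rewrite !scalerBr opprD addrACA.
rewrite reinnerDl ?subr_ge0 //.
have concave :=
  perspective_form_concave f_gt0 f_opmono f_subhom Y pds1 pds2 lam_gt0 lam_lt1.
apply: le_trans (lerB (lexx _) concave) _; rewrite opprD addrACA -!mulrBr.
by apply: lerD; apply: ler_wpM2l; rewrite ?subr_ge0 //; apply: chi2_ge_variational.
Qed.
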